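(* Let $P$ be a finite lattice, let $\mu:2^P\to\mathbb{R}_{\ge0}$ be additive, and let $r(f)=\mu(P\setminus\Phi f)$ for $f\in\mathcal{L}_P$. For $f\in\mathcal{L}_P$ define $\mathrm{resilience}(f)=\min\{r(s): s\in\mathcal{L}_P,\ f+s=1\}$ and $\mathrm{fragility}(f)=\max\{r(w): w\in\mathcal{L}_P,\ w\le f,\ w\text{ prime}\}$. Then $\mathrm{fragility}(f)+\mathrm{resilience}(f)=r(1)$.
   Context: $P$ is a finite lattice with greatest element $\hat p$. $\mathcal{L}_P$ is the set of maps $f:P\to P$ satisfying (A.1) $a\le f(a)$; (A.2) $a\le b\Rightarrow f(a)\le f(b)$; (A.3) $f(f(a))=f(a)$, ordered pointwise; it is a lattice with join $+$ and greatest element $1:a\mapsto\hat p$. $\Phi f=\{a:f(a)=a\}$. $f$ is prime if $P\setminus\Phi f$ is closed under $\wedge$. *)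

From HB Require Import structures.
From mathcomp Require Import all_boot all_order all_algebra.
Set Implicit Arguments. Unset Strict Implicit. Unset Printing Implicit Defensive.
Import Order.TTheory GRing.Theory Num.Theory.

Section ClosureOps.
Variables (d : Order.disp_t) (P : finTBLatticeType d).
Local Open Scope order_scope.

Definition is_closure (f : {ffun P -> P}) : bool :=
  [&& [forall a, a <= f a],
      [forall a, forall b, (a <= b) ==> (f a <= f b)] &
      [forall a, f (f a) == f a]].

Definition clo_le (f g : {ffun P -> P}) : bool := [forall a, f a <= g a].

Definition clo_top : {ffun P -> P} := [ffun _ => \top].

(* the join f + g in L_P: the closure operator whose fixed points are the
   common fixed points of f and g *)
Definition clo_join (f g : {ffun P -> P}) : {ffun P -> P} :=
  [ffun a => \meet_(x | (a <= x) && (f x == x) && (g x == x)) x].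

Definition nonfixed (f : {ffun P -> P}) : {set P} := [set a | f a != a].

Definition is_prime (f : {ffun P -> P}) : bool :=
  [forall a, forall b,
     (a \in nonfixed f) ==> (b \in nonfixed f) ==> ((a `&` b) \in nonfixed f)].

End ClosureOps.

Section Measures.
Variables (d : Order.disp_t) (P : finTBLatticeType d) (R : realFieldType).
Local Open Scope ring_scope.

Definition nonneg_additive (mu : {set P} -> R) : Prop :=
  (forall A, 0 <= mu A) /\
  (forall A B : {set P}, [disjoint A & B] -> mu (A :|: B) = mu A + mu B).

Definition rr (mu : {set P} -> R) (f : {ffun P -> P}) : R := mu (nonfixed f).

(* min { r(s) : s in L_P, f + s = 1 }; clo_top is always admissible, so
   using r(1) as the initial value of the fold does not change the min *)
Definition resilience (mu : {set P} -> R) (f : {ffun P -> P}) : R :=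
  \big[Num.min/rr mu (clo_top P)]_(s : {ffun P -> P} |
       is_closure s && (clo_join f s == clo_top P)) rr mu s.

(* max { r(w) : w in L_P, w <= f, w prime }; the identity is admissible
   with r = 0 and r >= 0, so the initial value 0 does not change the max *)
Definition fragility (mu : {set P} -> R) (f : {ffun P -> P}) : R :=
  \big[Num.max/0]_(w : {ffun P -> P} |
       [&& is_closure w, clo_le w f & is_prime w]) rr mu w.

End Measures.

From HB Require Import structures.
From mathcomp Require Import all_boot all_order all_algebra.
Import Order.TTheory GRing.Theory Num.Theory.
Set Implicit Arguments. Unset Strict Implicit.

(* A closure operator is determined by its fixed points, a meet-closed family
   containing the top, and w is prime exactly when its non-fixed points are
   meet-closed as well.  If w <= f is prime, the closure whose fixed points are
   the top and the non-fixed points of w is a complement of f, and its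
   non-fixed points fill up P \ {top} together with those of w: this gives
   fragility + resilience <= r(1).  Conversely, if f + s = 1, the non-top fixed
   points of s form a meet-closed set of non-fixed points of f.  A maximal such
   set K has a meet-closed complement, so K is the non-fixed set of a prime
   w <= f, and r(w) >= r(1) - r(s). *)

Section ClosureOperators.
Variables (d : Order.disp_t) (P : finTBLatticeType d).
Local Open Scope order_scope.
Implicit Types (f s w : {ffun P -> P}) (K M N : {set P}) (a b x : P).

Definition meet_closed M :=
  [forall a, forall b, (a \in M) ==> (b \in M) ==> (a `&` b \in M)].

Lemma meet_closedP M :
  reflect (forall a b, a \in M -> b \in M -> a `&` b \in M) (meet_closed M).
Proof.
apply: (iffP forallP) => [H a b aM bM|H a].
  by have /forallP/(_ b)/implyP/(_ aM)/implyP/(_ bM) := H a.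
by apply/forallP => b; apply/implyP => aM; apply/implyP => bM; apply: H.
Qed.

Lemma is_primeE w : is_prime w = meet_closed (nonfixed w).
Proof. by []. Qed.

Lemma meet_closedU1 K : meet_closed K -> meet_closed (\top |: K).
Proof.
move=> /meet_closedP mK; apply/meet_closedP => a b.
rewrite !inE => /orP[/eqP->|aK] /orP[/eqP->|bK].
- by rewrite meetxx eqxx.
- by rewrite meet1x bK orbT.
- by rewrite meetx1 aK orbT.
- by rewrite mK ?orbT.
Qed.

Lemma closure_ge f : is_closure f -> forall a, a <= f a.
Proof. by case/and3P => /forallP. Qed.

Lemma closure_mono f : is_closure f -> forall a b, a <= b -> f a <= f b.
Proof.
by case/and3P => _ /forallP H _ a b; have /forallP/(_ b)/implyP := H a.
Qed.

Lemma closure_idem f : is_closure f -> forall a, f (f a) = f a.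
Proof. by case/and3P => _ _ /forallP H a; apply/eqP. Qed.

Lemma closure_top f : is_closure f -> f \top = \top.
Proof. by move=> cf; apply/eqP; rewrite -le1x closure_ge. Qed.

Lemma top_notin_nonfixed f : is_closure f -> \top \notin nonfixed f.
Proof. by move=> cf; rewrite inE closure_top // eqxx. Qed.

Lemma nonfixed_sub_setCtop f : is_closure f -> nonfixed f \subset ~: [set \top].
Proof.
move=> cf; apply/subsetP => a aN; rewrite !inE.
by apply: contraNneq (top_notin_nonfixed cf) => <-.
Qed.

Lemma fixed_meet_closed f : is_closure f -> meet_closed (~: nonfixed f).
Proof.
move=> cf; apply/meet_closedP => a b; rewrite !inE !negbK => /eqP fa /eqP fb.
rewrite eq_le closure_ge // andbT lexI.
by rewrite -{2}fa -{3}fb !closure_mono ?leIl ?leIr.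
Qed.

Lemma nonfixed_subset w f :
  is_closure w -> clo_le w f -> nonfixed w \subset nonfixed f.
Proof.
move=> cw /forallP wf; apply/subsetP => a; rewrite !inE.
by apply: contraNN => /eqP fa; rewrite eq_le -{2}fa wf closure_ge.
Qed.

Lemma nonfixed_clo_top : nonfixed (clo_top P) = ~: [set \top].
Proof. by apply/setP => a; rewrite !inE ffunE eq_sym. Qed.

Lemma clo_join_topP f s :
  reflect (~: [set \top] \subset nonfixed f :|: nonfixed s)
          (clo_join f s == clo_top P).
Proof.
apply: (iffP eqP) => [J | sub].
- apply/subsetP => x; rewrite !inE; apply: contraNT.
  rewrite negb_or !negbK => /andP[fx sx].
  have : clo_join f s x <= x.
    by rewrite ffunE; apply: meets_inf; rewrite lexx fx sx.
  by rewrite J ffunE le1x.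
- apply/ffunP => a; rewrite !ffunE; apply/eqP; rewrite -le1x.
  apply/meetsP => x /andP[/andP[_ fx] sx]; rewrite le1x.
  apply/contraT => xt; move: (subsetP sub x).
  by rewrite !inE xt fx sx => /(_ isT).
Qed.

Definition moore_closure M : {ffun P -> P} :=
  [ffun a => \meet_(x | (a <= x) && (x \in M)) x].

Lemma moore_closure_ge M a : a <= moore_closure M a.
Proof. by rewrite ffunE; apply/meetsP => x /andP[]. Qed.

Lemma moore_closure_id M a : a \in M -> moore_closure M a = a.
Proof.
move=> aM; apply/eqP; rewrite eq_le moore_closure_ge andbT ffunE.
by apply: meets_inf; rewrite lexx aM.
Qed.

Lemma moore_closure_le M f : is_closure f -> ~: nonfixed f \subset M ->
  clo_le (moore_closure M) f.
Proof.
move=> cf fixM; apply/forallP => a; rewrite ffunE; apply: meets_inf.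
rewrite closure_ge //=; apply: (subsetP fixM).
by rewrite !inE negbK closure_idem.
Qed.

Section MeetClosedFamily.
Variable M : {set P}.
Hypotheses (meetM : meet_closed M) (topM : \top \in M).

Lemma moore_closure_mem a : moore_closure M a \in M.
Proof.
rewrite ffunE; elim/big_rec: _ => // x y /andP[_ xM] yM.
exact: (meet_closedP _ meetM).
Qed.

Lemma moore_closure_is_closure : is_closure (moore_closure M).
Proof.
apply/and3P; split.
- by apply/forallP => a; apply: moore_closure_ge.
- apply/forallP => a; apply/forallP => b; apply/implyP => ab.
  rewrite [moore_closure M b]ffunE; apply/meetsP => x /andP[bx xM].
  by rewrite ffunE; apply: meets_inf; rewrite xM (le_trans ab bx).
- by apply/forallP => a; rewrite moore_closure_id // moore_closure_mem.
Qed.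

Lemma nonfixed_moore_closure : nonfixed (moore_closure M) = ~: M.
Proof.
apply/setP => a; rewrite !inE.
have [aM|aM] := boolP (a \in M); first by rewrite moore_closure_id // eqxx.
by apply: contraNneq aM => <-; apply: moore_closure_mem.
Qed.

End MeetClosedFamily.

Section MaximalMeetClosedSubset.
Variables (N K : {set P}).
Hypotheses (meetCN : meet_closed (~: N))
  (maxK : maxset (fun K => meet_closed K && (K \subset N)) K).

(* Adjoining to K all meets x `&` k with k in K or k = top keeps it
   meet-closed, so by maximality one of these meets must leave N. *)
Lemma maxset_meet_closed_witness x : x \notin K ->
  exists2 k, k \in \top |: K & x `&` k \notin N.
Proof.
move=> xK; have /maxsetP[/andP[mK sKN] maxKP] := maxK.
have mK1 := meet_closedU1 mK; have /meet_closedP mK1P := mK1.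
set B := K :|: [set x `&` k | k in \top |: K].
have memB b : b \in B -> b \in K \/ exists2 k, k \in \top |: K & b = x `&` k.
  by rewrite inE => /orP[bK|/imsetP[k kK ->]]; [left|right; exists k].
have inK1 a : a \in K -> a \in \top |: K by rewrite inE orbC => ->.
have mB : meet_closed B.
  apply/meet_closedP => a b /memB[aK|[ka kaK ->]] /memB[bK|[kb kbK ->]].
  - by apply/setUP; left; apply: (meet_closedP _ mK).
  - apply/setUP; right; apply/imsetP; exists (a `&` kb); last by rewrite meetCA.
    by apply: mK1P => //; apply: inK1.
  - apply/setUP; right; apply/imsetP; exists (ka `&` b); last by rewrite meetA.
    by apply: mK1P => //; apply: inK1.
  - apply/setUP; right; apply/imsetP; exists (ka `&` kb).
      exact: mK1P.
    by rewrite meetACA meetxx.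
have [sBN|] := boolP (B \subset N).
  have BK : B = K by apply: maxKP; rewrite ?mB ?sBN ?subsetUl.
  case/negP: xK; rewrite -BK; apply/setUP; right; apply/imsetP.
  by exists \top; rewrite ?meetx1 // !inE eqxx.
case/subsetPn => b /memB[bK|[k kK ->]]; first by rewrite (subsetP sKN).
by exists k.
Qed.

Lemma maxset_meet_closed_setC : meet_closed (~: K).
Proof.
have /maxsetP[/andP[mK sKN] _] := maxK.
apply/meet_closedP => a b; rewrite !inE => aK bK; apply/negP => abK.
have [ka kaK aN] := maxset_meet_closed_witness aK.
have [kb kbK bN] := maxset_meet_closed_witness bK.
have kK : ka `&` kb \in \top |: K by apply: (meet_closedP _ (meet_closedU1 mK)).
have : (a `&` b) `&` (ka `&` kb) \in K.
  by case/setU1P: kK => [->|kK]; rewrite ?meetx1 // (meet_closedP _ mK).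
rewrite meetACA => /(subsetP sKN); apply/negP.
by rewrite -in_setC (meet_closedP _ meetCN) // in_setC.
Qed.

End MaximalMeetClosedSubset.

End ClosureOperators.

Section FragilityResilience.
Variables (d : Order.disp_t) (P : finTBLatticeType d) (R : realFieldType).
Variables (mu : {set P} -> R) (Hmu : nonneg_additive mu).
Local Open Scope ring_scope.
Implicit Types (f s w : {ffun P -> P}) (A B : {set P}).

Lemma mu_ge0 A : 0 <= mu A.
Proof. by case: Hmu. Qed.

Lemma mu_setD A B : A \subset B -> mu B = mu A + mu (B :\: A).
Proof.
move=> AB; case: Hmu => _ mu_setU.
rewrite -{1}(setID B A) (setIidPr AB) mu_setU //.
by rewrite disjoint_sym disjoints_subset subsetDr.
Qed.

Lemma mu_subset A B : A \subset B -> mu A <= mu B.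
Proof. by move=> /mu_setD ->; rewrite lerDl mu_ge0. Qed.

Lemma fragility_ge0 f : 0 <= fragility mu f.
Proof.
apply: (big_ind (fun x => 0 <= x)) => [//|x y x0 _|w _]; last exact: mu_ge0.
by rewrite le_max x0.
Qed.

Lemma rr_prime_add_resilience_le f w :
  is_closure w -> clo_le w f -> is_prime w ->
  rr mu w + resilience mu f <= rr mu (clo_top P).
Proof.
move=> cw wf pw; set M := (\top |: nonfixed w)%O.
have meetM : meet_closed M by apply: meet_closedU1.
have topM : (\top \in M)%O by rewrite !inE eqxx.
have wtop := nonfixed_sub_setCtop cw.
have complement : clo_join f (moore_closure M) == clo_top P.
  apply/clo_join_topP/subsetP => x xt; rewrite nonfixed_moore_closure // inE.
  have [xw|xw] := boolP (x \in nonfixed w).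
    by rewrite (subsetP (nonfixed_subset cw wf)).
  rewrite in_setC in_setU1 negb_or xw andbT; apply/orP; right.
  by rewrite !inE in xt.
have : resilience mu f <= rr mu (moore_closure M).
  by apply: bigmin_le_cond; rewrite moore_closure_is_closure // complement.
rewrite /rr nonfixed_moore_closure // setCU -setDE => res_le.
by rewrite nonfixed_clo_top (mu_setD wtop) lerD2l.
Qed.

Lemma rr_le_fragility_add f s :
  is_closure f -> is_closure s -> clo_join f s == clo_top P ->
  rr mu (clo_top P) <= fragility mu f + rr mu s.
Proof.
move=> cf cs /clo_join_topP cover.
set K := (~: [set \top] :\: nonfixed s)%O.
have meetK : meet_closed K.
  apply/meet_closedP => a b /setDP[a_top sa] /setDP[_ sb]; apply/setDP; split.
    by move: a_top; rewrite !inE meet_eq1 negb_and => ->.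
  by rewrite -in_setC (meet_closedP _ (fixed_meet_closed cs)) ?in_setC.
have KN : K \subset nonfixed f.
  by apply/subsetP => a /setDP[/(subsetP cover)]; rewrite inE => /orP[|->].
have [Km maxKm KKm] :=
  maxset_exists (P := fun K => meet_closed K && (K \subset nonfixed f))
                (introT andP (conj meetK KN)).
have /maxsetP[/andP[meetKm KmN] _] := maxKm.
have meetC := maxset_meet_closed_setC (fixed_meet_closed cf) maxKm.
have topC : (\top \in ~: Km)%O.
  by rewrite inE; apply: contraNN (top_notin_nonfixed cf); apply: (subsetP KmN).
set w := moore_closure (~: Km).
have prime_w : [&& is_closure w, clo_le w f & is_prime w].
  by rewrite moore_closure_is_closure // moore_closure_le ?setCS //
     is_primeE nonfixed_moore_closure // setCK meetKm.
have : rr mu w <= fragility mu f by apply: le_bigmax_cond.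
rewrite /rr nonfixed_moore_closure // setCK => frag_ge.
rewrite nonfixed_clo_top (mu_setD (nonfixed_sub_setCtop cs)) addrC lerD2r.
exact: le_trans (mu_subset KKm) frag_ge.
Qed.

End FragilityResilience.

Local Open Scope ring_scope.

Theorem mainTheorem17 (d : Order.disp_t) (P : finTBLatticeType d)
  (R : realFieldType) (mu : {set P} -> R) (Hmu : nonneg_additive mu)
  (f : {ffun P -> P}) (Hf : is_closure f) :
  fragility mu f + resilience mu f = rr mu (clo_top P).
Proof.
have res_le_top : resilience mu f <= rr mu (clo_top P) by apply: bigmin_le_id.
apply/le_anti/andP; split.
- rewrite -lerBrDr; apply: bigmax_le; first by rewrite subr_ge0.
  by move=> w /and3P[cw wf pw]; rewrite lerBrDr rr_prime_add_resilience_le.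
- rewrite -lerBlDl; apply: le_bigmin; first by rewrite gerBl fragility_ge0.
  by move=> s /andP[cs fs]; rewrite lerBlDl rr_le_fragility_add.
Qed.
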